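(* Let $H_1, H_2 : L_2 \to L_2$ be operators. Suppose there exist $\mu_1,\mu_2,\gamma_1,\gamma_2\ge 0$ and $\epsilon>0$ such that $H_1$ is incrementally $(\mu_1,\gamma_1)$-dissipative and $H_2$ is $\epsilon$-strongly incrementally $(\mu_2,\gamma_2)$-dissipative. If \[ \mu_1\mu_2<1,\qquad \mu_1\gamma_2<1,\qquad \mu_2\gamma_1<1, \] then the negative feedback interconnection of $H_1$ and $H_2$, i.e. the closed-loop operator $u\mapsto y$ defined by $y\in H_1(e)$, $e = u - w$, $w \in H_2(y)$ (equivalently the relation $(H_1^{-1}+H_2)^{-1}$), maps $L_2$ to $L_2$ and has finite incremental gain from $u$ to $y$: there exists $c<\infty$ such that $\|y_1-y_2\|\le c\|u_1-u_2\|$ for all closed-loop input/output pairs $(u_1,y_1),(u_2,y_2)$.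
   Context: $L_2 = L_2(\mathbb{R}^n)$ is the Hilbert space of square-integrable signals $u:\mathbb{R}_{\ge 0}\to\mathbb{R}^n$ with inner product $\langle u, y\rangle = \int_0^\infty u(t)^\top y(t)\,dt$ and induced norm $\|\cdot\|$. Operators are possibly multi-valued maps identified with their relations $\{(u,y): y\in H(u)\}$; relational operations: $H^{-1}=\{(y,u): y\in H(u)\}$, $H+G = \{(x,y+z) : (x,y)\in H, (x,z)\in G\}$. No causality is assumed or concluded. Definition: for $\mu,\gamma,\epsilon\ge 0$, $H:L_2\to L_2$ is $\epsilon$-strongly incrementally $(\mu,\gamma)$-dissipative if for all $u_1,u_2\in L_2$, $y_1\in H(u_1)$, $y_2\in H(u_2)$, either (i) $\|y_1-y_2\|\le \mu\|u_1-u_2\|$, or both (ii) $\langle u_1-u_2, y_1-y_2\rangle \ge \epsilon\|u_1-u_2\|^2$ and (iii) $\|y_1-y_2\|\le\gamma\|u_1-u_2\|$ hold (or all three hold). If $\epsilon=0$ it is called incrementally $(\mu,\gamma)$-dissipative. *)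

From HB Require Import structures.
From mathcomp Require Import all_boot all_order all_algebra.
From mathcomp Require Import all_classical all_reals all_analysis.
Set Implicit Arguments.
Unset Strict Implicit.
Unset Printing Implicit Defensive.
Import Order.TTheory GRing.Theory Num.Theory.
Local Open Scope classical_set_scope.
Local Open Scope ring_scope.

(* A signal u : R_{>=0} -> R^n, represented as a function on R whose
   values on t < 0 are irrelevant (only [0, +oo) is ever integrated). *)
Definition signal (R : realType) (n : nat) := R -> 'rV[R]_n.

Definition halfline (R : realType) : set R := `[0%R, +oo[%classic.

Definition pdot (R : realType) (n : nat) (u y : signal R n) (t : R) : R :=
  \sum_(i < n) u t ord0 i * y t ord0 i.

Definition inL2 (R : realType) (n : nat) (u : signal R n) : Prop :=
  (forall i : 'I_n, measurable_fun (@halfline R) (fun t => u t ord0 i)) /\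
  (@lebesgue_measure R).-integrable (@halfline R) (fun t => (pdot u u t)%:E).

Definition l2inner (R : realType) (n : nat) (u y : signal R n) : R :=
  Rintegral (@lebesgue_measure R) (@halfline R) (pdot u y).

Definition l2norm (R : realType) (n : nat) (u : signal R n) : R :=
  Num.sqrt (l2inner u u).

Definition ssub (R : realType) (n : nat) (u y : signal R n) : signal R n :=
  fun t => u t - y t.

(* A (possibly multi-valued) operator H : L_2 -> L_2, identified with its
   relation: H u y  means  y \in H(u). *)
Definition operator (R : realType) (n : nat) := signal R n -> signal R n -> Prop.

Definition is_L2_operator (R : realType) (n : nat) (H : operator R n) : Prop :=
  forall u y, H u y -> inL2 u /\ inL2 y.

Definition strongly_incr_dissipative (R : realType) (n : nat)
    (eps mu gam : R) (H : operator R n) : Prop :=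
  forall u1 u2 y1 y2, H u1 y1 -> H u2 y2 ->
    l2norm (ssub y1 y2) <= mu * l2norm (ssub u1 u2) \/
    (l2inner (ssub u1 u2) (ssub y1 y2) >= eps * l2norm (ssub u1 u2) ^+ 2 /\
     l2norm (ssub y1 y2) <= gam * l2norm (ssub u1 u2)).

Definition incr_dissipative (R : realType) (n : nat)
    (mu gam : R) (H : operator R n) : Prop :=
  strongly_incr_dissipative 0 mu gam H.

Definition feedback (R : realType) (n : nat) (H1 H2 : operator R n) : operator R n :=
  fun u y => exists e w, H1 e y /\ e = ssub u w /\ H2 y w.

From HB Require Import structures.
From mathcomp Require Import all_boot all_order all_algebra.
From mathcomp Require Import all_classical all_reals all_analysis.
From mathcomp Require Import measurable_realfun.
From mathcomp Require Import ring lra.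
Import Order.TTheory GRing.Theory Num.Theory.
Local Open Scope classical_set_scope.
Local Open Scope ring_scope.

(* For closed-loop pairs (u1, y1), (u2, y2) write U, Y, E, W for the L2 norms
   of the increments of the input u, output y, error e = u - w and feedback
   signal w.  Since e1 - e2 = (u1 - u2) - (w1 - w2), the triangle inequality
   gives E <= U + W.  Each of H1, H2 is in a "small gain" branch or a
   "passive" branch; in the three cases where at least one operator has small
   gain, Y <= a*E and W <= b*Y with a*b < 1 give Y <= a/(1 - a*b) * U.  When
   both are passive, 0 <= <e, y> = <u, y> - <w, y> and <y, w> >= eps*Y^2, so
   by Cauchy-Schwarz eps*Y^2 <= U*Y, i.e. Y <= U/eps.  The sum of these four
   constants is a gain valid in every case. *)

Section SignalAlgebra.
Context {R : realType} {n : nat}.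
Implicit Types (u v w : signal R n) (a : R).

Definition sscale a u : signal R n := fun t => a *: u t.

Lemma pdotC u v : pdot u v = pdot v u.
Proof. by apply/funext => t; apply: eq_bigr => i _; rewrite mulrC. Qed.

Lemma pdot_ge0 u t : 0 <= pdot u u t.
Proof. by apply: sumr_ge0 => i _; rewrite -expr2 sqr_ge0. Qed.

Lemma pdot_subl u v w t : pdot (ssub u v) w t = pdot u w t - pdot v w t.
Proof. by rewrite /pdot -sumrB; apply: eq_bigr => i _; rewrite !mxE mulrBl. Qed.

Lemma pdot_scalel a u w t : pdot (sscale a u) w t = a * pdot u w t.
Proof. by rewrite /pdot mulr_sumr; apply: eq_bigr => i _; rewrite !mxE mulrA. Qed.

Lemma pdot_subr u v w t : pdot w (ssub u v) t = pdot w u t - pdot w v t.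
Proof. by rewrite !(pdotC w) pdot_subl. Qed.

Lemma pdot_scaler a u w t : pdot w (sscale a u) t = a * pdot w u t.
Proof. by rewrite !(pdotC w) pdot_scalel. Qed.

Lemma ssub_increment (u1 w1 u2 w2 : signal R n) :
  ssub (ssub u1 w1) (ssub u2 w2) = ssub (ssub u1 u2) (ssub w1 w2).
Proof. by apply/funext => t; apply/matrixP => i j; rewrite !mxE; ring. Qed.

End SignalAlgebra.

Section L2Space.
Context {R : realType} {n : nat}.
Implicit Types (u v w : signal R n) (a : R).

Lemma measurable_halfline :
  measurable (@halfline R : set (g_sigma_algebraType R.-ocitv.-measurable)).
Proof. exact: measurable_itv. Qed.

Lemma measurable_pdot {u v} : inL2 u -> inL2 v ->
  measurable_fun (@halfline R) (pdot u v).
Proof. by move=> [mU _] [mV _]; apply: measurable_sum => i; exact: measurable_funM. Qed.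

Lemma norm_mul_le_sqr (x y : R) : `|x * y| <= x ^+ 2 + y ^+ 2.
Proof. by have [h|h] := lerP 0 (x * y); [rewrite ger0_norm //|rewrite ltr0_norm //]; nra. Qed.

(* The pointwise inner product of two L2 signals is integrable on [0, +oo),
   being dominated by pdot u u + pdot v v. *)
Lemma integrable_pdot {u v} : inL2 u -> inL2 v ->
  (@lebesgue_measure R).-integrable (@halfline R) (fun t => (pdot u v t)%:E).
Proof.
move=> hu hv; have [_ iu] := hu; have [_ iv] := hv.
apply: (le_integrable measurable_halfline _ _ (integrableD measurable_halfline iu iv)).
  by apply/measurable_EFinP; exact: measurable_pdot.
move=> t _; rewrite -EFinD /= lee_fin [X in _ <= X]ger0_norm ?addr_ge0 ?pdot_ge0 //.
rewrite /pdot -big_split /=; apply: le_trans (ler_norm_sum _ _ _) _.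
by apply: ler_sum => i _; rewrite -!expr2; exact: norm_mul_le_sqr.
Qed.

Lemma inL2_sub {u v} : inL2 u -> inL2 v -> inL2 (ssub u v).
Proof.
move=> hu hv; have [mU _] := hu; have [mV _] := hv; split.
  move=> i; rewrite (_ : (fun t => _) = (fun t => u t ord0 i - v t ord0 i)).
    exact: measurable_funB.
  by apply/funext => t; rewrite !mxE.
have iuu := integrable_pdot hu hu; have iuv := integrable_pdot hu hv.
have ivu := integrable_pdot hv hu; have ivv := integrable_pdot hv hv.
have i := integrableB measurable_halfline
  (integrableB measurable_halfline iuu iuv) (integrableB measurable_halfline ivu ivv).
apply: (eq_integrable measurable_halfline _ _ _ i) => t _ /=.
by rewrite pdot_subl !pdot_subr -!EFinB.
Qed.

Lemma inL2_scale a {u} : inL2 u -> inL2 (sscale a u).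
Proof.
move=> hu; have [mU _] := hu; split.
  move=> i; rewrite (_ : (fun t => _) = (fun t => a * u t ord0 i)).
    exact: measurable_funM.
  by apply/funext => t; rewrite !mxE.
have i := integrableZl measurable_halfline (a * a) (integrable_pdot hu hu).
apply: (eq_integrable measurable_halfline _ _ _ i) => t _ /=.
by rewrite pdot_scalel pdot_scaler -EFinM mulrA.
Qed.

Lemma l2innerC u v : l2inner u v = l2inner v u.
Proof. by rewrite /l2inner pdotC. Qed.

Lemma l2inner_ge0 u : 0 <= l2inner u u.
Proof. by apply: Rintegral_ge0 => t _; exact: pdot_ge0. Qed.

Lemma l2inner_subl {u v w} : inL2 u -> inL2 v -> inL2 w ->
  l2inner (ssub u v) w = l2inner u w - l2inner v w.
Proof.
move=> hu hv hw; rewrite /l2inner (_ : pdot _ _ = fun t => pdot u w t - pdot v w t).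
  exact: RintegralB measurable_halfline (integrable_pdot hu hw) (integrable_pdot hv hw).
by apply/funext => t; rewrite pdot_subl.
Qed.

Lemma l2inner_subr {u v w} : inL2 u -> inL2 v -> inL2 w ->
  l2inner w (ssub u v) = l2inner w u - l2inner w v.
Proof. by move=> hu hv hw; rewrite !(l2innerC w) l2inner_subl. Qed.

Lemma l2inner_scalel a {u w} : inL2 u -> inL2 w ->
  l2inner (sscale a u) w = a * l2inner u w.
Proof.
move=> hu hw; rewrite /l2inner (_ : pdot _ _ = fun t => a * pdot u w t).
  exact: RintegralZl measurable_halfline (integrable_pdot hu hw).
by apply/funext => t; rewrite pdot_scalel.
Qed.

Lemma l2norm_ge0 u : 0 <= l2norm u.
Proof. exact: sqrtr_ge0. Qed.

Lemma l2normK u : l2norm u ^+ 2 = l2inner u u.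
Proof. by rewrite sqr_sqrtr // l2inner_ge0. Qed.

Lemma l2norm_comb_sqr a b {u v} : inL2 u -> inL2 v ->
  l2norm (ssub (sscale a u) (sscale b v)) ^+ 2 =
  a ^+ 2 * l2norm u ^+ 2 - 2 * a * b * l2inner u v + b ^+ 2 * l2norm v ^+ 2.
Proof.
move=> hu hv; have hau := inL2_scale a hu; have hbv := inL2_scale b hv.
have hd := inL2_sub hau hbv.
rewrite !l2normK (l2inner_subl hau hbv hd) !(l2inner_subr hau hbv) //.
rewrite !l2inner_scalel // !(l2innerC _ (sscale _ _)) !l2inner_scalel //.
by rewrite (l2innerC v u); ring.
Qed.

End L2Space.

Lemma discriminant_le (R : realFieldType) (A B C : R) :
  0 <= A -> 0 <= C ->
  (forall s t : R, 0 <= s ^+ 2 * A - 2 * s * t * B + t ^+ 2 * C) ->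
  B ^+ 2 <= A * C.
Proof.
move=> hA hC q; have qCB := q C B; have qBA := q B A; have q1B := q 1 B.
have [Cpos|C0] := ltrP 0 C; first by nra.
have [Apos|A0] := ltrP 0 A; first by nra.
have -> : C = 0 by apply/le_anti/andP.
have -> : A = 0 by apply/le_anti/andP.
by nra.
Qed.

Lemma le_of_sqr_le (R : realDomainType) (x y : R) :
  0 <= y -> x ^+ 2 <= y ^+ 2 -> x <= y.
Proof. by move=> hy hxy; nra. Qed.

Section HilbertInequalities.
Context {R : realType} {n : nat}.
Implicit Types (u v : signal R n).

(* Cauchy-Schwarz, from the nonnegativity of ||s u - t v||^2. *)
Lemma cauchy_schwarz {u v} : inL2 u -> inL2 v ->
  `|l2inner u v| <= l2norm u * l2norm v.
Proof.
move=> hu hv; apply: le_of_sqr_le; first by rewrite mulr_ge0 ?l2norm_ge0.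
rewrite (real_normK (num_real _)) exprMn; apply: discriminant_le; rewrite ?sqr_ge0 // => s t.
by rewrite -l2norm_comb_sqr ?sqr_ge0.
Qed.

Lemma l2norm_sub_le {u v} : inL2 u -> inL2 v ->
  l2norm (ssub u v) <= l2norm u + l2norm v.
Proof.
move=> hu hv; apply: le_of_sqr_le; first by rewrite addr_ge0 ?l2norm_ge0.
have -> : ssub u v = ssub (sscale 1 u) (sscale 1 v).
  by apply/funext => t; rewrite /ssub /sscale !scale1r.
rewrite l2norm_comb_sqr //; have := lerNnormlW (cauchy_schwarz hu hv).
by nra.
Qed.

End HilbertInequalities.

Lemma small_gain_bound {R : realFieldType} {a b Y E U W : R} :
  0 <= a -> a * b < 1 -> Y <= a * E -> E <= U + W -> W <= b * Y ->
  Y <= a / (1 - a * b) * U.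
Proof.
move=> ha hab hY hE hW; rewrite mulrAC ler_pdivlMr ?subr_gt0 //.
by nra.
Qed.

Lemma strict_passivity_bound (R : realFieldType) (eps Y U : R) :
  0 < eps -> 0 <= Y -> 0 <= U -> eps * Y ^+ 2 <= U * Y -> Y <= eps^-1 * U.
Proof.
move=> he hY hU h; rewrite mulrC ler_pdivlMr // mulrC.
have [->|Ypos] := eqVneq Y 0; first by rewrite mulr0.
have : 0 < Y by rewrite lt0r Ypos.
by nra.
Qed.

Section ClosedLoop.
Context {R : realType} {n : nat} {H1 H2 : operator R n}.
Hypotheses (L2H1 : is_L2_operator H1) (L2H2 : is_L2_operator H2).

(* All four loop signals are in L2, u being recovered as e - (-1) w. *)
Lemma feedback_signals_L2 {u y e w} : H1 e y -> e = ssub u w -> H2 y w ->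
  [/\ inL2 u, inL2 y, inL2 e & inL2 w].
Proof.
move=> h1 ee h2; have [he hy] := L2H1 _ _ h1; have [_ hw] := L2H2 _ _ h2.
suff -> : u = ssub e (sscale (-1) w) by split => //; exact/inL2_sub/inL2_scale.
by apply/funext => t; rewrite ee /ssub /sscale scaleN1r opprK subrK.
Qed.

Lemma feedback_L2 u y : feedback H1 H2 u y -> inL2 u /\ inL2 y.
Proof. by move=> [e [w [h1 [ee h2]]]]; have [] := feedback_signals_L2 h1 ee h2. Qed.

Lemma passive_loop_bound (eps : R) {du dw dy : signal R n} :
  inL2 du -> inL2 dw -> inL2 dy -> 0 < eps ->
  0 <= l2inner (ssub du dw) dy -> eps * l2norm dy ^+ 2 <= l2inner dy dw ->
  l2norm dy <= eps^-1 * l2norm du.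
Proof.
move=> hu hw hy he hpos hstrict.
apply: strict_passivity_bound; rewrite ?l2norm_ge0 //.
have := ler_normlW (cauchy_schwarz hu hy).
rewrite (l2inner_subl hu hw hy) (l2innerC dw) in hpos.
by lra.
Qed.

Variables (mu1 mu2 gam1 gam2 eps : R).

(* The closed-loop incremental gain: one term per combination of branches. *)
Definition feedback_gain : R :=
  mu1 / (1 - mu1 * mu2) + mu1 / (1 - mu1 * gam2) + gam1 / (1 - gam1 * mu2)
  + eps^-1.

Hypotheses (mu1_ge0 : 0 <= mu1) (gam1_ge0 : 0 <= gam1) (eps_gt0 : 0 < eps).
Hypotheses (D1 : incr_dissipative mu1 gam1 H1)
           (D2 : strongly_incr_dissipative eps mu2 gam2 H2).
Hypotheses (mu1mu2 : mu1 * mu2 < 1) (mu1gam2 : mu1 * gam2 < 1)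
           (mu2gam1 : mu2 * gam1 < 1).

Lemma le_feedback_gain (Y U : R) : 0 <= U ->
  [\/ Y <= mu1 / (1 - mu1 * mu2) * U, Y <= mu1 / (1 - mu1 * gam2) * U,
       Y <= gam1 / (1 - gam1 * mu2) * U | Y <= eps^-1 * U] ->
  Y <= feedback_gain * U.
Proof.
have gain_ge0 (a b : R) : 0 <= a -> a * b < 1 -> 0 <= a / (1 - a * b).
  by move=> ha hab; rewrite divr_ge0 // subr_ge0 ltW.
have k1 := gain_ge0 _ _ mu1_ge0 mu1mu2; have k2 := gain_ge0 _ _ mu1_ge0 mu1gam2.
have k3 : 0 <= gam1 / (1 - gam1 * mu2) by apply: gain_ge0; rewrite // mulrC.
have k4 : 0 <= eps^-1 by rewrite invr_ge0 ltW.
move=> hU; have p1 := mulr_ge0 k1 hU; have p2 := mulr_ge0 k2 hU.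
have p3 := mulr_ge0 k3 hU; have p4 := mulr_ge0 k4 hU.
by rewrite /feedback_gain !mulrDl; case=> h; lra.
Qed.

Lemma feedback_incremental_bound u1 y1 u2 y2 :
  feedback H1 H2 u1 y1 -> feedback H1 H2 u2 y2 ->
  l2norm (ssub y1 y2) <= feedback_gain * l2norm (ssub u1 u2).
Proof.
move=> [e1 [w1 [h11 [ee1 h21]]]] [e2 [w2 [h12 [ee2 h22]]]].
have [lu1 ly1 _ lw1] := feedback_signals_L2 h11 ee1 h21.
have [lu2 ly2 _ lw2] := feedback_signals_L2 h12 ee2 h22.
have ldu := inL2_sub lu1 lu2; have ldw := inL2_sub lw1 lw2.
have ldy := inL2_sub ly1 ly2.
have de : ssub e1 e2 = ssub (ssub u1 u2) (ssub w1 w2)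
  by rewrite ee1 ee2 ssub_increment.
have tri : l2norm (ssub e1 e2) <= l2norm (ssub u1 u2) + l2norm (ssub w1 w2)
  by rewrite de; exact: l2norm_sub_le.
apply: le_feedback_gain; first exact: l2norm_ge0.
have [g1|[p1 g1]] := D1 _ _ _ _ h11 h12;
have [g2|[p2 g2]] := D2 _ _ _ _ h21 h22.
- by apply: Or41; exact: small_gain_bound mu1_ge0 mu1mu2 g1 tri g2.
- by apply: Or42; exact: small_gain_bound mu1_ge0 mu1gam2 g1 tri g2.
- apply: Or43; apply: small_gain_bound gam1_ge0 _ g1 tri g2.
  by rewrite mulrC mu2gam1.
- apply: Or44; apply: passive_loop_bound ldu ldw ldy eps_gt0 _ p2.
  by rewrite -de -(mul0r (l2norm (ssub e1 e2) ^+ 2)).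
Qed.

End ClosedLoop.

Theorem theorem1 (R : realType) (n : nat) (H1 H2 : operator R n)
    (mu1 mu2 gam1 gam2 eps : R) :
  is_L2_operator H1 -> is_L2_operator H2 ->
  0 <= mu1 -> 0 <= mu2 -> 0 <= gam1 -> 0 <= gam2 -> 0 < eps ->
  incr_dissipative mu1 gam1 H1 ->
  strongly_incr_dissipative eps mu2 gam2 H2 ->
  mu1 * mu2 < 1 -> mu1 * gam2 < 1 -> mu2 * gam1 < 1 ->
  (forall u y, feedback H1 H2 u y -> inL2 u /\ inL2 y) /\
  exists c : R, forall u1 y1 u2 y2,
    feedback H1 H2 u1 y1 -> feedback H1 H2 u2 y2 ->
    l2norm (ssub y1 y2) <= c * l2norm (ssub u1 u2).
Proof.
move=> L1 L2 hmu1 _ hgam1 _ heps D1 D2 c12 c1g2 c2g1; split.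
  by move=> u y; exact: feedback_L2.
exists (feedback_gain mu1 mu2 gam1 gam2 eps) => u1 y1 u2 y2.
exact: feedback_incremental_bound.
Qed.
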